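(* The logic $\mathsf{CK}\oplus\mathsf{C}_\Diamond\oplus\mathsf{I}_{\Diamond\Box}$ is a conservative extension of $\mathsf{CK}_\Box$: a $\Diamond$-free formula is derivable in $\mathsf{CK}\oplus\mathsf{C}_\Diamond\oplus\mathsf{I}_{\Diamond\Box}$ if and only if it is a theorem of $\mathsf{CK}_\Box$.
   Context: Formulas: $\mathbf{L}$ is generated from a countably infinite set of propositional variables by $\varphi ::= p \mid \bot \mid \varphi\wedge\varphi \mid \varphi\vee\varphi \mid \varphi\to\varphi \mid \Box\varphi \mid \Diamond\varphi$; $\neg\varphi:=\varphi\to\bot$. Axioms: $\mathsf{K}_\Box$: $\Box(\varphi\to\psi)\to(\Box\varphi\to\Box\psi)$; $\mathsf{K}_\Diamond$: $\Box(\varphi\to\psi)\to(\Diamond\varphi\to\Diamond\psi)$; $\mathsf{C}_\Diamond$: $\Diamond(\varphi\vee\psi)\to\Diamond\varphi\vee\Diamond\psi$; $\mathsf{I}_{\Diamond\Box}$: $(\Diamond\varphi\to\Box\psi)\to\Box(\varphi\to\psi)$. For a set $\mathsf{Ax}$ of axioms, $\mathsf{CK}\oplus\mathsf{Ax}$ is the relation $\Gamma\vdash_{\mathsf{Ax}}\varphi$ inductively generated by: (Ax) $\Gamma\vdash\varphi$ whenever $\varphi$ is a substitution instance of an axiom of a standard Hilbert axiomatisation of intuitionistic propositional logic, of $\mathsf{K}_\Box$, of $\mathsf{K}_\Diamond$, or of an element of $\mathsf{Ax}$; (El) $\Gamma\vdash\varphi$ if $\varphi\in\Gamma$; (MP)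 from $\Gamma\vdash\varphi$ and $\Gamma\vdash\varphi\to\psi$ infer $\Gamma\vdash\psi$; (Nec) from $\emptyset\vdash\varphi$ infer $\Gamma\vdash\Box\varphi$. A formula is derivable if $\emptyset\vdash_{\mathsf{Ax}}\varphi$. $\mathsf{CK}_\Box$ is the logic on $\Diamond$-free formulas axiomatised by intuitionistic propositional logic plus $\mathsf{K}_\Box$, closed under modus ponens and necessitation (from $\varphi$ infer $\Box\varphi$). A logic is a conservative extension of $\mathsf{CK}_\Box$ if its derivable $\Diamond$-free formulas are exactly the theorems of $\mathsf{CK}_\Box$. *)

Inductive form : Type :=
| Var : nat -> form
| Bot : form
| And : form -> form -> form
| Or  : form -> form -> form
| Imp : form -> form -> form
| Box : form -> form
| Dia : form -> form.

Definition Neg (a : form) : form := Imp a Bot.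

Fixpoint diafree (a : form) : Prop :=
  match a with
  | Var _ | Bot => True
  | And b c | Or b c | Imp b c => diafree b /\ diafree c
  | Box b => diafree b
  | Dia _ => False
  end.

Inductive IPC_ax : form -> Prop :=
| IA1 a b : IPC_ax (Imp a (Imp b a))
| IA2 a b c : IPC_ax (Imp (Imp a (Imp b c)) (Imp (Imp a b) (Imp a c)))
| IA3 a b : IPC_ax (Imp (And a b) a)
| IA4 a b : IPC_ax (Imp (And a b) b)
| IA5 a b : IPC_ax (Imp a (Imp b (And a b)))
| IA6 a b : IPC_ax (Imp a (Or a b))
| IA7 a b : IPC_ax (Imp b (Or a b))
| IA8 a b c : IPC_ax (Imp (Imp a c) (Imp (Imp b c) (Imp (Or a b) c)))
| IA9 a : IPC_ax (Imp Bot a).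

Inductive KBox_ax : form -> Prop :=
| KBox a b : KBox_ax (Imp (Box (Imp a b)) (Imp (Box a) (Box b))).

Inductive KDia_ax : form -> Prop :=
| KDia a b : KDia_ax (Imp (Box (Imp a b)) (Imp (Dia a) (Dia b))).

Inductive CDia_ax : form -> Prop :=
| CDia a b : CDia_ax (Imp (Dia (Or a b)) (Or (Dia a) (Dia b))).

Inductive IDiaBox_ax : form -> Prop :=
| IDiaBox a b : IDiaBox_ax (Imp (Imp (Dia a) (Box b)) (Box (Imp a b))).

Inductive CK_deriv (Ax : form -> Prop) : (form -> Prop) -> form -> Prop :=
| D_ipc G a : IPC_ax a -> CK_deriv Ax G a
| D_kbox G a : KBox_ax a -> CK_deriv Ax G a
| D_kdia G a : KDia_ax a -> CK_deriv Ax G a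
| D_extra G a : Ax a -> CK_deriv Ax G a
| D_el (G : form -> Prop) a : G a -> CK_deriv Ax G a
| D_mp G a b : CK_deriv Ax G a -> CK_deriv Ax G (Imp a b) -> CK_deriv Ax G b
| D_nec G a : CK_deriv Ax (fun _ => False) a -> CK_deriv Ax G (Box a).

Definition Ax_C_I (a : form) : Prop := CDia_ax a \/ IDiaBox_ax a.

Definition derivable (Ax : form -> Prop) (a : form) : Prop :=
  CK_deriv Ax (fun _ => False) a.

Inductive CKBox_thm : form -> Prop :=
| B_ipc a : diafree a -> IPC_ax a -> CKBox_thm a
| B_kbox a : diafree a -> KBox_ax a -> CKBox_thm a
| B_mp a b : CKBox_thm a -> CKBox_thm (Imp a b) -> CKBox_thm b
| B_nec a : CKBox_thm a -> CKBox_thm (Box a).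


(* Reading [Dia] as the constant [top] maps every axiom of
   CK + C_Dia + I_{Dia Box} to a theorem of CK_Box: K_Dia and C_Dia become
   implications into [top] or [top \/ top], and I_{Dia Box} becomes
   [(top -> Box b) -> Box (a -> b)], which holds since [Box b] entails
   [Box (a -> b)].  The translation fixes Diamond-free formulas, so a
   Diamond-free theorem of the extension is already a theorem of CK_Box;
   the converse inclusion is immediate. *)

Definition top : form := Imp Bot Bot.

Fixpoint dia_top (a : form) : form :=
  match a with
  | Var n => Var n
  | Bot => Bot
  | And b c => And (dia_top b) (dia_top c)
  | Or b c => Or (dia_top b) (dia_top c)
  | Imp b c => Imp (dia_top b) (dia_top c)
  | Box b => Box (dia_top b)
  | Dia _ => top
  end.

Lemma diafree_dia_top : forall a, diafree (dia_top a).
Proof. induction a; simpl; tauto. Qed.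

Lemma dia_top_id : forall a, diafree a -> dia_top a = a.
Proof.
  induction a; simpl; intros Ha; try tauto;
    try destruct Ha; f_equal; auto.
Qed.

Lemma CKBox_top : CKBox_thm top.
Proof. apply B_ipc; [simpl; tauto | constructor]. Qed.

Lemma CKBox_weaken a b :
  diafree a -> diafree b -> CKBox_thm b -> CKBox_thm (Imp a b).
Proof.
  intros Ha Hb Hthm. apply (B_mp b); [exact Hthm |].
  apply B_ipc; [simpl; tauto | constructor].
Qed.

Lemma CKBox_imp_refl a : diafree a -> CKBox_thm (Imp a a).
Proof.
  intros Ha.
  apply (B_mp (Imp a (Imp a a))); [apply B_ipc; [simpl; tauto | constructor] |].
  apply (B_mp (Imp a (Imp (Imp a a) a))); apply B_ipc; simpl; try tauto; constructor.
Qed.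

Lemma CKBox_imp_trans a b c :
  diafree a -> diafree b -> diafree c ->
  CKBox_thm (Imp a b) -> CKBox_thm (Imp b c) -> CKBox_thm (Imp a c).
Proof.
  intros Ha Hb Hc Hab Hbc.
  apply (B_mp (Imp a b)); [exact Hab |].
  apply (B_mp (Imp a (Imp b c))); [apply CKBox_weaken; simpl; tauto |].
  apply B_ipc; [simpl; tauto | constructor].
Qed.

Lemma CKBox_top_imp_elim a : diafree a -> CKBox_thm (Imp (Imp top a) a).
Proof.
  intros Ha.
  apply (B_mp (Imp (Imp top a) top));
    [apply CKBox_weaken; [simpl; tauto | simpl; tauto | exact CKBox_top] |].
  apply (B_mp (Imp (Imp top a) (Imp top a))); [apply CKBox_imp_refl; simpl; tauto |].
  apply B_ipc; [simpl; tauto | constructor].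
Qed.

Lemma CKBox_box_mono a b :
  diafree a -> diafree b ->
  CKBox_thm (Imp a b) -> CKBox_thm (Imp (Box a) (Box b)).
Proof.
  intros Ha Hb Hab. apply (B_mp (Box (Imp a b))); [apply B_nec, Hab |].
  apply B_kbox; [simpl; tauto | constructor].
Qed.

Ltac solve_diafree := simpl; repeat split; apply diafree_dia_top.

Lemma dia_top_IPC_ax a : IPC_ax a -> CKBox_thm (dia_top a).
Proof. destruct 1; (apply B_ipc; [solve_diafree | constructor]). Qed.

Lemma dia_top_KBox_ax a : KBox_ax a -> CKBox_thm (dia_top a).
Proof. destruct 1; (apply B_kbox; [solve_diafree | constructor]). Qed.

Lemma dia_top_KDia_ax a : KDia_ax a -> CKBox_thm (dia_top a).
Proof.
  intros [x y]; simpl.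
  apply CKBox_weaken; [solve_diafree | solve_diafree |].
  apply CKBox_imp_refl; simpl; tauto.
Qed.

Lemma dia_top_CDia_ax a : CDia_ax a -> CKBox_thm (dia_top a).
Proof. intros [x y]; apply B_ipc; [simpl; tauto | constructor]. Qed.

Lemma dia_top_IDiaBox_ax a : IDiaBox_ax a -> CKBox_thm (dia_top a).
Proof.
  intros [x y]; simpl.
  pose proof (diafree_dia_top x); pose proof (diafree_dia_top y).
  apply (CKBox_imp_trans _ (Box (dia_top y))); simpl; try tauto.
  - apply CKBox_top_imp_elim; simpl; tauto.
  - apply CKBox_box_mono; simpl; try tauto.
    apply B_ipc; [simpl; tauto | constructor].
Qed.

Lemma dia_top_sound G a :
  CK_deriv Ax_C_I G a ->
  (forall x, G x -> CKBox_thm (dia_top x)) -> CKBox_thm (dia_top a).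
Proof.
  intros D; induction D as [G a Hax | G a Hax | G a Hax | G a [Hax | Hax] | G a Hel
                           | G a b _ IHa _ IHab | G a _ IH]; intros HG.
  - exact (dia_top_IPC_ax a Hax).
  - exact (dia_top_KBox_ax a Hax).
  - exact (dia_top_KDia_ax a Hax).
  - exact (dia_top_CDia_ax a Hax).
  - exact (dia_top_IDiaBox_ax a Hax).
  - exact (HG a Hel).
  - exact (B_mp _ _ (IHa HG) (IHab HG)).
  - apply B_nec, IH; intros x [].
Qed.

Lemma CKBox_thm_derivable Ax a : CKBox_thm a -> derivable Ax a.
Proof.
  unfold derivable; intros H; induction H.
  - apply D_ipc; assumption.
  - apply D_kbox; assumption.
  - apply (D_mp _ _ a b); assumption.
  - apply D_nec; assumption.
Qed.

Theorem mainTheorem11 :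
  forall a : form, diafree a ->
    (derivable Ax_C_I a <-> CKBox_thm a).
Proof.
  intros a Ha; split.
  - intros D. rewrite <- (dia_top_id a Ha).
    apply (dia_top_sound _ _ D); intros x [].
  - apply CKBox_thm_derivable.
Qed.
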